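(* In the setting and construction described in the context, let $n\in\mathbb{N}$, $k\in\mathbb{N}\cup\{0\}$ and $x\in Z(p_n,\dots,p_{n+k})$. Then there exist pairwise disjointly supported vectors $(y_j)_{j=0}^k$ in $c_{00}$ such that $x=\sum_{j=0}^ky_j$, $\|y_j\|_{\ell^1}=\theta_{p_{n+j}}^{-1}$ for $0\le j\le k$, and $\operatorname{supp}y_j\in[\mathcal{S}_{\eta_n+1},\dots,\mathcal{S}_{\eta_{n+j}+1}]\cap[M_{n+j}]^{<\infty}$ for $0\le j\le k$.
   Context: Standing setting: $(\theta_n)$ nonincreasing null in $(0,1)$; $(\mathcal{F}_n)$ regular families (hereditary, spreading, compact in $[\mathbb{N}]^{<\infty}\subseteq 2^{\mathbb{N}}$); $X=T[(\theta_n,\mathcal{F}_n)]$ as usual (completion of $c_{00}$ under $\|x\|=\max\{\|x\|_{c_0},\sup_n\sup\theta_n\sum_i\|E_ix\|\}$ over $\mathcal{F}_n$-admissible $(E_i)$, i.e. $E_1<\dots<E_k$ with $\{\min E_i\}\in\mathcal{F}_n$); $(e_k)$ unit vectors. $\alpha_n=\iota(\mathcal{F}_n)>1$ (Cantor–Bendixson index), $\alpha=\sup\alpha_n\ne\alpha_n$ for all $n$, $\alpha=\omega^{\omega^\xi}$, $0<\xi<\omega_1$. Schreier families: $\mathcal{S}_0$ = singletons and $\emptyset$, $\mathcal{S}_1=\{F:|F|\le\min F\}$, $\mathcal{S}_{\beta+1}=\mathcal{S}_1[\mathcal{S}_\beta]$, limit $\beta$: $\mathcal{S}_\beta=\{F\in\mathcal{S}_{\beta_k}\text{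 some }k\le\min F\}$ for a fixed $\beta_k\uparrow\beta$. $\mathcal{M}[\mathcal{N}]$ = unions of $\mathcal{M}$-admissible sequences of members of $\mathcal{N}$; $[\mathcal{M}_1]=\mathcal{M}_1$, $[\mathcal{M}_1,\dots,\mathcal{M}_{i+1}]=[\mathcal{M}_1,\dots,\mathcal{M}_i][\mathcal{M}_{i+1}]$, empty list gives $\mathcal{S}_0$. $\|y\|_{\mathcal{F}}=\sup_{F\in\mathcal{F}}\sum_{k\in F}|y_k|$. $\ell(\beta)$ = leading exponent of the Cantor normal form. $\gamma(\varepsilon,m)=\max\{\ell(\alpha_{n_s}\cdots\alpha_{n_1}):\varepsilon\theta_{n_1}\cdots\theta_{n_s}>\theta_m\}$ ($\max\emptyset=0$). Assume $(\dagger)$: there is $\varepsilon>0$ such that for every $\beta<\omega^\xi$ some $m$ has $\gamma(\varepsilon,m)+2+\beta<\ell(\alpha_m)$; fix such $\varepsilon\in(0,1)$. $K_{\delta,p,\eta}=\{(0,n_1,\dots,n_s):s\ge0,\ \theta_{n_1}\cdots\theta_{n_s}>\delta\theta_p,\ \ell(\alpha_{n_s}\cdots\alpha_{n_1})<\eta\}$ (finite). Construction: $(\beta_n)$ is the sequence increasing to $\omega^\xi$ defining $\mathcal{S}_{\omega^\xi}$; $M_0$ infinite. Choose $p_1$ with $\theta_{p_1}\le\varepsilon^2/4$ and $\gamma(\varepsilon,p_1)+2+\beta_1<\ell(\alpha_{p_1})$, $\eta_1=\gamma(\varepsilon,p_1)+1$, $q_1$ with $\theta_{q_1}\le\varepsilon\theta_{p_1}/4$,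 infinite $M_1\subseteq M_0$ with $\mathcal{S}_{\beta_1}[\mathcal{S}_{\eta_1+1}]\cap[M_1]^{<\infty}\subseteq\mathcal{F}_{p_1}$ and $[\mathcal{F}_{n_1},\dots,\mathcal{F}_{n_s}]\cap[M_1]^{<\infty}\subseteq\mathcal{S}_{\eta_1}$ for all $(0,n_1,\dots,n_s)\in K_{4^{-1},p_1,\eta_1}$. For $n\ge2$: $p_n>q_{n-1}$ with $\theta_{p_n}\le\varepsilon^2/4^n$ and $\gamma(\varepsilon,p_n)+2+\gamma(\varepsilon,q_{n-1})+2+\eta_{n-1}+1+\dots+\eta_1+1+\beta_n<\ell(\alpha_{p_n})$; $\eta_n=\gamma(\varepsilon,p_n)+\gamma(\varepsilon,q_{n-1})+1$; $q_n>p_n$ with $\theta_{q_n}\le\varepsilon\theta_{p_n}/4^n$; infinite $M_n\subseteq M_{n-1}$ with $\mathcal{S}_{\beta_n}[\mathcal{S}_{\eta_1+1},\dots,\mathcal{S}_{\eta_n+1}]\cap[M_n]^{<\infty}\subseteq\mathcal{F}_{p_n}$ and $[\mathcal{F}_{n_1},\dots,\mathcal{F}_{n_s}]\cap[M_n]^{<\infty}\subseteq\mathcal{S}_{\eta_n}$ for all $(0,n_1,\dots,n_s)\in K_{4^{-n},p_n,\eta_n}$. $Z(p_n)$ is the set of $x\in c_{00}$ with $\|x\|_{\ell^1}=\theta_{p_n}^{-1}$, $\operatorname{supp}x\in\mathcal{S}_{\eta_n+1}\cap[M_n]^{<\infty}$, and $\|x\|_{\mathcal{S}_{\eta_n}}\le4^{-n}(|K_{4^{-n},p_n,\eta_n}|+1)^{-1}$.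 Inductively, $Z(p_n,\dots,p_{n+k})$ ($k\ge1$) is the set of vectors $\theta_{p_n}^{-1}\sum_{i=1}^ra_ie_{m_i}+\sum_{i=1}^ra_iz_i$ with $m_1<\operatorname{supp}z_1<\dots<m_r<\operatorname{supp}z_r$, $\theta_{p_n}^{-1}\sum_ia_ie_{m_i}\in Z(p_n)$ and $z_i\in Z(p_{n+1},\dots,p_{n+k})$. *)

From HB Require Import structures.
From mathcomp Require Import all_boot all_order all_algebra.
From mathcomp Require Import finmap.
From mathcomp Require Import reals.
Set Implicit Arguments.
Unset Strict Implicit.
Unset Printing Implicit Defensive.
Import Order.TTheory GRing.Theory Num.Theory.
Local Open Scope fset_scope.
Local Open Scope ring_scope.

(* Countable ordinals as Brouwer trees; a limit [OLim f] carries its fixed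
   approximating sequence (f k)_{k>=1} (f 0 is ignored). *)
Inductive cord : Type := OZero | OSucc of cord | OLim of (nat -> cord).

Definition family := {fset nat} -> Prop.

Definition set_lt (E F : {fset nat}) : Prop :=
  forall a b, a \in E -> b \in F -> (a < b)%N.

Definition is_min (m : nat) (E : {fset nat}) : Prop :=
  m \in E /\ forall l, l \in E -> (m <= l)%N.

Definition schreier0 : family := fun F => (#|` F| <= 1)%N.
Definition schreier1 : family := fun F => forall m, m \in F -> (#|` F| <= m)%N.

(* A[B] : unions of A-admissible sequences E_1 < ... < E_r of members of B
   (A-admissible: {min E_i} in A). *)
Definition compose (A B : family) : family := fun F =>
  exists (Es : seq {fset nat}) (ms : seq nat),
    size ms = size Es /\
    (forall i, (i < size Es)%N ->
       is_min (nth 0%N ms i) (nth fset0 Es i) /\ B (nth fset0 Es i)) /\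
    (forall i j, (i < j)%N -> (j < size Es)%N ->
       set_lt (nth fset0 Es i) (nth fset0 Es j)) /\
    (forall l, l \in F <-> exists2 E, E \in Es & l \in E) /\
    A [fset m | m in ms].

Fixpoint schreier (b : cord) : family :=
  match b with
  | OZero => schreier0
  | OSucc b' => compose schreier1 (schreier b')
  | OLim f => fun F => F = fset0 \/
      exists k, (1 <= k)%N /\ (forall m, m \in F -> (k <= m)%N) /\ schreier (f k) F
  end.

(* [M_1, ..., M_i] with [M_1,...,M_{i+1}] = [M_1,...,M_i][M_{i+1}],
   empty list giving S_0. *)
Definition iter_comp (l : seq family) : family :=
  match l with
  | [::] => schreier0
  | A :: l' => foldl compose A l'
  end.

Definition supp_is {R : realType} (x : nat -> R) (F : {fset nat}) : Prop :=
  forall l, (l \in F) = (x l != 0).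

Section Z.
Variables (R : realType) (theta : nat -> R) (p : nat -> nat) (eta : nat -> cord)
          (M : nat -> pred nat) (c : nat -> R).

(* Z(p_n); c n stands for 4^{-n}(|K_{4^{-n},p_n,eta_n}|+1)^{-1} *)
Definition Zbase (n : nat) (x : nat -> R) : Prop :=
  exists F : {fset nat}, supp_is x F /\
    \sum_(l <- F) `|x l| = (theta (p n))^-1 /\
    schreier (OSucc (eta n)) F /\
    (forall l, l \in F -> M n l) /\
    (forall G, schreier (eta n) G -> \sum_(l <- G) `|x l| <= c n).

(* Zset k n = Z(p_n, ..., p_{n+k}) *)
Fixpoint Zset (k n : nat) (x : nat -> R) : Prop :=
  match k with
  | 0 => Zbase n x
  | k'.+1 => exists (r : nat) (a : nat -> R) (m : nat -> nat) (z : nat -> nat -> R),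
      (forall i, (i < r)%N -> Zset k' n.+1 (z i)) /\
      (forall i, (i.+1 < r)%N -> (m i < m i.+1)%N) /\
      (forall i l, (i < r)%N -> z i l != 0 ->
          (m i < l)%N /\ ((i.+1 < r)%N -> (l < m i.+1)%N)) /\
      Zbase n (fun l => (theta (p n))^-1 * \sum_(i < r | m i == l) a i) /\
      x = (fun l => (theta (p n))^-1 * \sum_(i < r | m i == l) a i
                    + \sum_(i < r) a i * z i l)
  end.
End Z.

From Pilot Require Import Defs.
From HB Require Import structures.
From mathcomp Require Import all_boot all_order all_algebra.
From mathcomp Require Import finmap.
From mathcomp Require Import reals.

(* An x in Z(p_n,...,p_{n+k+1}) is the node vector
   theta_{p_n}^-1 sum_i a_i e_{m_i} of Z(p_n) plus sum_i a_i z_i, where each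
   z_i in Z(p_{n+1},...,p_{n+k+1}) lives strictly between the consecutive nodes
   m_i < m_{i+1}; so the z_i are disjointly supported and miss the nodes.
   Decomposing z_i = sum_j Y_{i,j} by induction, take y_0 to be the node vector
   and y_{j+1} = sum_i a_i Y_{i,j}.  Disjointness makes l1-norms additive, and
   sum_i |a_i| = 1 because the node vector has norm theta_{p_n}^-1; hence
   ||y_{j+1}||_1 = theta_{p_{n+j+1}}^-1.  The support of y_{j+1} is the
   increasing union of the supports of the Y_{i,j}, which lie in
   [S_{eta_{n+1}+1},...,S_{eta_{n+j+1}+1}]; their minima are images of nodes
   under a spreading map, so they form a set of S_{eta_n+1} (Schreier families
   are spreading), and associativity of A[B] gives the admissibility of the
   union. *)

Set Implicit Arguments.
Unset Strict Implicit.
Unset Printing Implicit Defensive.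
Import Order.TTheory GRing.Theory Num.Theory.
Local Open Scope fset_scope.

Lemma set_ltP (E F : {fset nat}) : reflect (set_lt E F) (allrel ltn E F).
Proof.
apply: (iffP allrelP) => [lt_EF a b aE bF | lt_EF a b aE bF]; exact: lt_EF.
Qed.

Section ComposePairs.
Variables (A B : Defs.family).

Definition compose_pairs (F : {fset nat}) (Ps : seq (nat * {fset nat})) : Prop :=
  [/\ forall P, P \in Ps -> is_min P.1 P.2 /\ B P.2,
      pairwise (fun P Q : nat * {fset nat} => allrel ltn P.2 Q.2) Ps,
      forall l, l \in F <-> exists2 P, P \in Ps & l \in P.2
    & A [fset m | m in map fst Ps]].

Lemma composeP F : compose A B F <-> exists Ps, compose_pairs F Ps.
Proof.
split.
- case=> Es [ms [size_ms [minB [lt_Es [unionF A_ms]]]]].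
  exists (zip ms Es); split.
  + move=> P /(nthP (0%N, fset0)) [i]; rewrite size_zip size_ms minnn => lt_i <-.
    by rewrite nth_zip //; apply: minB.
  + apply/(pairwiseP (0%N, fset0)) => i j; rewrite !inE size_zip size_ms minnn.
    by move=> lt_i lt_j lt_ij; rewrite !nth_zip //; apply/set_ltP/lt_Es.
  + move=> l; rewrite unionF; split.
    * case=> E /(nthP fset0) [i lt_i <-] lE; exists (nth 0%N ms i, nth fset0 Es i) => //.
      by rewrite -nth_zip //; apply: mem_nth; rewrite size_zip size_ms minnn.
    * case=> P PP lP; exists P.2 => //.
      by rewrite -[Es](@unzip2_zip _ _ ms) ?size_ms //; apply: map_f.
  + by rewrite -[map fst _]/(unzip1 _) unzip1_zip ?size_ms.
- case=> Ps [minB lt_Ps unionF A_Ps].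
  exists (map snd Ps), (map fst Ps); split; first by rewrite !size_map.
  split; [|split; [|split]] => //.
  + move=> i; rewrite size_map => lt_i.
    by rewrite !(nth_map (0%N, fset0)) //; apply/minB/mem_nth.
  + move=> i j lt_ij; rewrite size_map => lt_j.
    have lt_i := ltn_trans lt_ij lt_j.
    rewrite !(nth_map (0%N, fset0)) //; apply/set_ltP.
    by move/(pairwiseP (0%N, fset0)): lt_Ps; apply; rewrite ?inE.
  + move=> l; rewrite unionF; split.
    * by case=> P PP lP; exists P.2 => //; apply: map_f.
    * by case=> E /mapP [P PP ->] lE; exists P.
Qed.

End ComposePairs.

Lemma seq_all_exists (T : eqType) (U : Type) (u0 : U) (P : T -> U -> Prop) (s : seq T) :
  {in s, forall x, exists y, P x y} -> exists f : T -> U, {in s, forall x, P x (f x)}.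
Proof.
elim: s => [|x0 s IHs] exP; first by exists (fun=> u0).
have [f Pf] : exists f : T -> U, {in s, forall x, P x (f x)}.
  by apply: IHs => x xs; apply: exP; rewrite inE xs orbT.
have [y0 Py0] := exP x0 (mem_head _ _).
exists (fun x => if x == x0 then y0 else f x) => x; rewrite inE.
by case: eqP => [-> //|_ /= /Pf].
Qed.

Lemma pairwise_flatten (T U : eqType) (r : rel U) (f : T -> seq U) (s : seq T) :
  {in s, forall x, pairwise r (f x)} ->
  pairwise (fun x y => allrel r (f x) (f y)) s -> pairwise r (flatten (map f s)).
Proof.
elim: s => [|x s IHs] //= rf /andP [rx rs].
rewrite pairwise_cat rf ?mem_head // IHs ?andbT //; last first.
  by move=> y ys; apply: rf; rewrite inE ys orbT.
apply/allrelP => u v uf /flattenP [w /mapP [y ys ->] vy].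
by move/allP: rx => /(_ y ys) /allrelP; apply.
Qed.

Lemma allrel_ltn_sub (E E' F F' : {fset nat}) :
  E' `<=` E -> F' `<=` F -> allrel ltn E F -> allrel ltn E' F'.
Proof.
move=> /fsubsetP sE /fsubsetP sF /allrelP lt_EF.
by apply/allrelP => a b /sE aE /sF bF; apply: lt_EF.
Qed.

Lemma compose_pairs_sub A B F Ps P :
  compose_pairs A B F Ps -> P \in Ps -> P.2 `<=` F.
Proof. by case=> _ _ unionF _ PP; apply/fsubsetP => l lP; apply/unionF; exists P. Qed.

Lemma compose_pairs_mins_sub A B F Ps :
  compose_pairs A B F Ps -> [fset m | m in map fst Ps] `<=` F.
Proof.
move=> WPs; have [minB _ _ _] := WPs; apply/fsubsetP => t; rewrite inE => /mapP [P PP ->].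
exact: (fsubsetP (compose_pairs_sub WPs PP)) _ (minB P PP).1.1.
Qed.

Lemma is_min_compose_pairs A B F Ps m :
  is_min m F -> compose_pairs A B F Ps -> is_min m [fset q | q in map fst Ps].
Proof.
move=> [mF minF] WPs; have [minB _ unionF _] := WPs.
split; last by move=> q /(fsubsetP (compose_pairs_mins_sub WPs)); apply: minF.
have [P PP mP] := (unionF m).1 mF; have [[P1P minP] _] := minB P PP.
suff -> : m = P.1 by rewrite inE map_f.
by apply/eqP; rewrite eqn_leq minP // minF // (fsubsetP (compose_pairs_sub WPs PP)).
Qed.

Lemma compose_assoc (A B C : Defs.family) F :
  compose A (compose B C) F -> compose (compose A B) C F.
Proof.
case/composeP => Ps WPs; have [minBC lt_Ps unionF A_Ps] := WPs.
have [Qs WQs] : exists Qs : nat * {fset nat} -> seq (nat * {fset nat}),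
    {in Ps, forall P, compose_pairs B C P.2 (Qs P)}.
  apply: (seq_all_exists [::] (P := fun P => compose_pairs B C P.2)).
  by move=> P /minBC [_ /composeP].
have subQ P Q : P \in Ps -> Q \in Qs P -> Q.2 `<=` P.2.
  by move=> PP; apply: compose_pairs_sub (WQs P PP).
apply/composeP; exists (flatten (map Qs Ps)); split.
- by move=> Q /flattenP [_ /mapP [P PP ->]]; case: (WQs P PP) => + _ _ _; apply.
- apply: pairwise_flatten => [P PP|]; first by case: (WQs P PP).
  apply: (sub_in_pairwise _ (allss Ps) lt_Ps) => P P' PP PP' lt_PP'.
  apply/allrelP => Q Q' QP Q'P'.
  exact: allrel_ltn_sub (subQ P Q PP QP) (subQ P' Q' PP' Q'P') lt_PP'.
- move=> l; rewrite unionF; split.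
  + case=> P PP; case: (WQs P PP) => _ _ /(_ l) [+ _] _ => /[apply] -[Q QP lQ].
    by exists Q => //; apply/flattenP; exists (Qs P) => //; apply: map_f.
  + case=> Q /flattenP [_ /mapP [P PP ->] QP] lQ; exists P => //.
    exact: (fsubsetP (subQ P Q PP QP)).
pose mins P := [fset m | m in map fst (Qs P)].
apply/composeP; exists [seq (P.1, mins P) | P <- Ps]; split.
- move=> _ /mapP [P PP ->] /=; have [minP _] := minBC P PP.
  by split; [apply: is_min_compose_pairs minP (WQs P PP) | case: (WQs P PP)].
- rewrite pairwise_map; apply: (sub_in_pairwise _ (allss Ps) lt_Ps) => P P' PP PP'.
  exact: allrel_ltn_sub (compose_pairs_mins_sub (WQs P PP))
                        (compose_pairs_mins_sub (WQs P' PP')).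
- move=> t; rewrite inE; split.
  + case/mapP => Q /flattenP [_ /mapP [P PP ->] QP] ->.
    by exists (P.1, mins P); [apply: (map_f _ PP) | rewrite /= inE map_f].
  + case=> _ /mapP [P PP ->]; rewrite /= inE => /mapP [Q QP ->].
    by apply/map_f/flattenP; exists (Qs P) => //; apply: map_f.
- by rewrite -map_comp.
Qed.

Definition spreading (A : Defs.family) : Prop :=
  forall (F : {fset nat}) (h : nat -> nat), A F ->
    {in F, forall a, a <= h a} -> {in F &, forall a c, a < c -> h a < h c} ->
    A (h @` F).

Lemma spreading_schreier0 : spreading schreier0.
Proof. by move=> F h F1 _ _; apply: leq_trans F1; apply: leq_imfset_card. Qed.

Lemma spreading_schreier1 : spreading schreier1.
Proof.
move=> F h S1F le_h _ _ /imfsetP [a aF ->].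
apply: leq_trans (leq_imfset_card _ _ _) _.
exact: leq_trans (S1F a aF) (le_h a aF).
Qed.

Lemma imfset_map (h : nat -> nat) (s : seq nat) :
  [fset m | m in map h s] = h @` [fset m | m in s].
Proof.
apply/fsetP => x; rewrite inE; apply/mapP/imfsetP => [[y ys ->]|[y]].
  by exists y => //; rewrite /= inE.
by rewrite /= inE => ys ->; exists y.
Qed.

Lemma spreading_compose A B : spreading A -> spreading B -> spreading (compose A B).
Proof.
move=> spA spB F h /composeP [Ps WPs] le_h lt_h.
have [minB lt_Ps unionF A_Ps] := WPs.
have subF P : P \in Ps -> {subset P.2 <= F}.
  by move=> PP; apply/fsubsetP/(compose_pairs_sub WPs PP).
pose hP (P : nat * {fset nat}) := (h P.1, h @` P.2).
apply/composeP; exists (map hP Ps); split.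
- move=> _ /mapP [P PP ->] /=; have [[P1P minP] BP] := minB P PP.
  have subP := subF P PP.
  split; last exact: spB BP (sub_in1 subP le_h) (sub_in2 subP lt_h).
  split=> [|_ /imfsetP [a aP ->]]; first exact: in_imfset.
  have := minP a aP; rewrite leq_eqVlt => /orP [/eqP -> //|lt_P1a].
  by apply/ltnW/lt_h; rewrite ?subP.
- rewrite pairwise_map; apply: (sub_in_pairwise _ (allss Ps) lt_Ps).
  move=> P P' PP PP' /set_ltP lt_PP'; apply/set_ltP => _ _ /imfsetP [a aP ->] /imfsetP [c cP ->].
  by apply: lt_h; [apply: (subF P) | apply: (subF P') | apply: lt_PP'].
- move=> l; split.
  + case/imfsetP => a /unionF [P PP aP] ->.
    by exists (hP P); [apply: map_f | apply: in_imfset].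
  + by case=> _ /mapP [P PP ->] /imfsetP [a aP ->]; apply/in_imfset/(subF P).
- have /fsubsetP subM := compose_pairs_mins_sub WPs.
  rewrite -map_comp (map_comp h fst) imfset_map.
  exact: spA A_Ps (sub_in1 subM le_h) (sub_in2 subM lt_h).
Qed.

Lemma spreading_schreier b : spreading (schreier b).
Proof.
elim: b => [|b IHb|f IHf] /=.
- exact: spreading_schreier0.
- exact: spreading_compose spreading_schreier1 IHb.
- move=> F h [-> _ _|[k [k_ge1 [le_kF Sf_F]]] le_h lt_h]; first by left; rewrite imfset0.
  right; exists k; split => //; split; last exact: IHf.
  by move=> _ /imfsetP [a aF ->]; apply: leq_trans (le_kF a aF) (le_h a aF).
Qed.

Lemma compose_monol (A A' B : Defs.family) F :
  (forall G, A G -> A' G) -> compose A B F -> compose A' B F.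
Proof. by move=> AA' [Es [ms [? [? [? [? /AA' ?]]]]]]; exists Es, ms. Qed.

Lemma foldl_compose_monol l : forall (A A' : Defs.family) F,
  (forall G, A G -> A' G) -> foldl compose A l F -> foldl compose A' l F.
Proof.
elim: l => [|B l IHl] A A' F AA' /=; first exact: AA'.
by apply: IHl => G; apply: compose_monol.
Qed.

Lemma compose_iter_comp l : forall (A B : Defs.family) F,
  compose A (iter_comp (B :: l)) F -> iter_comp (A :: B :: l) F.
Proof.
elim: l => [|C l IHl] A B F //= ABCl.
have /= := IHl A (compose B C) F ABCl.
by apply: foldl_compose_monol => G; apply: compose_assoc.
Qed.

Lemma compose_bigfcup (T : choiceType) (A B : Defs.family) (s : seq T)
    (mu : T -> nat) (G : T -> {fset nat}) :
  {in s, forall i, is_min (mu i) (G i) /\ B (G i)} ->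
  pairwise (fun i i' => allrel ltn (G i) (G i')) s ->
  A [fset mu i | i in s] ->
  compose A B (\bigcup_(i <- s) G i).
Proof.
move=> minB lt_s A_s; pose muG i := (mu i, G i).
apply/composeP; exists (map muG s); split.
- by move=> _ /mapP [i si ->]; apply: minB.
- by rewrite pairwise_map.
- move=> l; split.
  + by case/bigfcupP => i /andP [si _] lG; exists (muG i) => //; apply: map_f.
  + by case=> _ /mapP [i si ->] lG; apply/bigfcupP; exists i; rewrite ?si.
- suff -> : [fset m | m in map fst (map muG s)] = [fset mu i | i in s] by [].
  apply/fsetP => t; rewrite !inE -map_comp.
  by apply/mapP/imfsetP => -[i si ->]; exists i.
Qed.

Local Open Scope ring_scope.

Section DisjointlySupportedSum.
Variables (R : numDomainType) (I : finType) (P : pred I) (f : I -> R).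
Hypothesis f_disj : {in P &, forall i i', f i != 0 -> f i' != 0 -> i = i'}.

Lemma disjoint_supp_eq0 i0 i : P i0 -> f i0 != 0 -> P i -> i != i0 -> f i = 0.
Proof. by move=> Pi0 fi0 Pi; apply: contraNeq => fi; apply/eqP/f_disj. Qed.

Lemma sum_disjoint_supp i0 : P i0 -> f i0 != 0 -> \sum_(i | P i) f i = f i0.
Proof.
move=> Pi0 fi0; rewrite (bigD1 i0) //= big1 ?addr0 // => i /andP [Pi ne].
exact: disjoint_supp_eq0 Pi0 fi0 Pi ne.
Qed.

Lemma sum_disjoint_supp_neq0 :
  (\sum_(i | P i) f i != 0) = [exists i, P i && (f i != 0)].
Proof.
apply/idP/idP => [|/existsP [i0 /andP [Pi0 fi0]]]; last by rewrite (sum_disjoint_supp Pi0).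
apply: contraTT => /existsPn f0; rewrite negbK big1 // => i Pi.
by apply/eqP; move: (f0 i); rewrite Pi negbK.
Qed.

Lemma norm_sum_disjoint_supp : `|\sum_(i | P i) f i| = \sum_(i | P i) `|f i|.
Proof.
case: (pickP [pred i | P i && (f i != 0)]) => [i0 /andP [Pi0 fi0]|f0]; last first.
  have f_eq0 i : P i -> f i = 0.
    by move=> Pi; move/negbT: (f0 i); rewrite /= Pi negbK => /eqP.
  by rewrite !big1 ?normr0 // => i /f_eq0 ->; rewrite normr0.
rewrite (sum_disjoint_supp Pi0 fi0) (bigD1 i0) //= big1 ?addr0 // => i /andP [Pi ne].
by rewrite (disjoint_supp_eq0 Pi0 fi0 Pi ne) normr0.
Qed.

End DisjointlySupportedSum.

Lemma l1_supp_incl (R : realType) (f : nat -> R) (F G : {fset nat}) :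
  supp_is f F -> F `<=` G -> \sum_(l <- G) `|f l| = \sum_(l <- F) `|f l|.
Proof.
move=> suppF FG; symmetry; apply: big_fset_incl => // l _.
by rewrite suppF negbK => /eqP ->; rewrite normr0.
Qed.

Lemma exists_is_min (E : {fset nat}) l : l \in E -> exists m, is_min m E.
Proof.
move=> lE; have exE : exists l, l \in E by exists l.
by case: (ex_minnP exE) => m mE minE; exists m.
Qed.

Record is_decomposition (R : realType) (theta : nat -> R) (p : nat -> nat)
    (eta : nat -> cord) (M : nat -> pred nat) (k n : nat) (x : nat -> R)
    (y : nat -> nat -> R) (Fs : nat -> {fset nat}) : Prop := Decomposition {
  decomp_supp : forall j, (j <= k)%N -> supp_is (y j) (Fs j);
  decomp_disj : forall i j, (i <= k)%N -> (j <= k)%N -> i != j -> Fs i `&` Fs j = fset0;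
  decomp_sum : forall l, x l = \sum_(j < k.+1) y j l;
  decomp_norm : forall j, (j <= k)%N -> \sum_(l <- Fs j) `|y j l| = (theta (p (n + j)%N))^-1;
  decomp_schreier : forall j, (j <= k)%N ->
    iter_comp [seq schreier (OSucc (eta (n + i)%N)) | i <- iota 0 j.+1] (Fs j);
  decomp_M : forall j, (j <= k)%N -> forall l, l \in Fs j -> M (n + j)%N l }.

Section DecompositionStep.
Variables (R : realType) (theta : nat -> R) (p : nat -> nat) (eta : nat -> cord).
Variables (M : nat -> pred nat) (n k r : nat) (a : nat -> R) (m : nat -> nat).
Variable z : nat -> nat -> R.
Hypothesis theta_gt0 : forall j, 0 < theta (p (n + j)%N).
Hypothesis m_incr : forall i, (i.+1 < r)%N -> (m i < m i.+1)%N.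
Hypothesis z_between : forall i l, (i < r)%N -> z i l != 0 ->
  (m i < l)%N /\ ((i.+1 < r)%N -> (l < m i.+1)%N).

Lemma node_lt i j : (i < j < r)%N -> (m i < m j)%N.
Proof.
elim: j => // j IHj /andP []; rewrite ltnS leq_eqVlt => /orP [/eqP -> //|lt_ij] lt_jr.
  exact: m_incr.
apply: (@ltn_trans (m j)); last exact: m_incr.
by apply: IHj; rewrite lt_ij (ltnW lt_jr).
Qed.

Lemma node_le i j : (i <= j < r)%N -> (m i <= m j)%N.
Proof.
case/andP; rewrite leq_eqVlt => /orP [/eqP -> //|lt_ij lt_jr].
by apply/ltnW/node_lt; rewrite lt_ij.
Qed.

Lemma node_inj (i j : 'I_r) : m i = m j -> i = j.
Proof.
move=> eq_m; apply/val_inj; case: (ltngtP i j) => // [lt_ij|lt_ji].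
  by have := @node_lt i j; rewrite lt_ij ltn_ord eq_m ltnn => /(_ isT).
by have := @node_lt j i; rewrite lt_ji ltn_ord eq_m ltnn => /(_ isT).
Qed.

Lemma z_supp_lt (i i' : 'I_r) u v :
  (i < i')%N -> z i u != 0 -> z i' v != 0 -> (u < v)%N.
Proof.
move=> lt_ii' zu zv; have lt_i'r := ltn_ord i'.
have lt_u := (z_between (ltn_ord i) zu).2 (leq_ltn_trans lt_ii' lt_i'r).
have lt_v := (z_between lt_i'r zv).1.
apply: ltn_trans (leq_trans lt_u _) lt_v.
by apply: node_le; rewrite lt_ii' lt_i'r.
Qed.

Lemma z_supp_disj (i i' : 'I_r) l : z i l != 0 -> z i' l != 0 -> i = i'.
Proof.
move=> zi zi'; apply/val_inj; case: (ltngtP i i') => // lt_ii'.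
  by have := z_supp_lt lt_ii' zi zi'; rewrite ltnn.
by have := z_supp_lt lt_ii' zi' zi; rewrite ltnn.
Qed.

Lemma z_supp_off_nodes (i i' : 'I_r) l : z i l != 0 -> m i' != l.
Proof.
move=> zl; have [lt_l lt_r] := z_between (ltn_ord i) zl; rewrite neq_ltn.
case: (leqP i' i) => [le_i'i|lt_ii'].
  by rewrite (leq_ltn_trans (node_le _) lt_l) // le_i'i ltn_ord.
apply/orP; right; apply: leq_trans (lt_r (leq_ltn_trans lt_ii' (ltn_ord i'))) _.
by apply: node_le; rewrite lt_ii' ltn_ord.
Qed.

Variable F0 : {fset nat}.
Let b l := (theta (p n))^-1 * \sum_(i < r | m i == l) a i.
Hypothesis b_supp : supp_is b F0.
Hypothesis b_norm : \sum_(l <- F0) `|b l| = (theta (p n))^-1.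
Hypothesis b_schreier : schreier (OSucc (eta n)) F0.
Hypothesis b_M : forall l, l \in F0 -> M n l.

Lemma theta_n_gt0 : 0 < theta (p n).
Proof. by rewrite -[n]addn0. Qed.

Lemma mem_F0 l : (l \in F0) = [exists i : 'I_r, (m i == l) && (a i != 0)].
Proof.
rewrite b_supp /b mulf_eq0 negb_or invr_eq0 gt_eqF ?theta_n_gt0 //=.
rewrite sum_disjoint_supp_neq0 // => i i' /eqP <- /eqP /node_inj -> _ _ //.
Qed.

Lemma sum_norm_a : \sum_(i < r) `|a i| = 1.
Proof.
have inv_gt0 : 0 < (theta (p n))^-1 by rewrite invr_gt0 theta_n_gt0.
apply: (mulfI (lt0r_neq0 inv_gt0)); rewrite mulr1 -[RHS]b_norm mulr_sumr.
have b_norm_l l : `|b l| = (theta (p n))^-1 * \sum_(i < r | m i == l) `|a i|.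
  rewrite normrM gtr0_norm // norm_sum_disjoint_supp // => i i' /eqP <- /eqP.
  by move=> /node_inj.
under [RHS]eq_bigr do rewrite b_norm_l mulr_sumr.
rewrite (exchange_big_dep xpredT) //=; apply: eq_bigr => i _; rewrite -big_filter.
case: (eqVneq (a i) 0) => [-> | ai]; first by rewrite normr0 mulr0 big1.
have mF0 : m i \in F0 by rewrite mem_F0; apply/existsP; exists i; rewrite eqxx ai.
rewrite (@eq_filter _ _ (pred1 (m i))) => [|l]; last exact: eq_sym.
by rewrite filter_pred1_uniq ?fset_uniq // big_seq1.
Qed.

Variables (Y : 'I_r -> nat -> nat -> R) (FF : 'I_r -> nat -> {fset nat}).
Hypothesis Y_decomp : forall i : 'I_r, is_decomposition theta p eta M k n.+1 (z i) (Y i) (FF i).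

Lemma Y_supp_z i j l : (j <= k)%N -> Y i j l != 0 -> z i l != 0.
Proof.
move=> le_jk Yl; rewrite (decomp_sum (Y_decomp i)) sum_disjoint_supp_neq0.
  by apply/existsP; exists (Ordinal (le_jk : (j < k.+1)%N)).
move=> j1 j2 _ _ Y1 Y2; apply/val_inj/eqP; apply: contraT => ne_j.
have dec := Y_decomp i; have /fsetP/(_ l) := decomp_disj dec (ltn_ord j1) (ltn_ord j2) ne_j.
by rewrite in_fset0 in_fsetI !(decomp_supp dec) ?Y1 ?Y2 // -ltnS.
Qed.

Lemma mem_FF_z i j l : (j <= k)%N -> l \in FF i j -> z i l != 0.
Proof. by move=> le_jk; rewrite (decomp_supp (Y_decomp i) le_jk); apply: Y_supp_z. Qed.

Lemma exists_min_FF i j : (j <= k)%N -> exists t, is_min t (FF i j).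
Proof.
move=> le_jk; case: (fset_0Vmem (FF i j)) => [FF0|[l /exists_is_min //]].
have := decomp_norm (Y_decomp i) le_jk; rewrite FF0 big_seq_fset0 => /esym /eqP.
by rewrite invr_eq0 addSnnS gt_eqF.
Qed.

Definition active := [seq i : 'I_r <- enum 'I_r | a i != 0].

Lemma mem_active i : (i \in active) = (a i != 0).
Proof. by rewrite mem_filter mem_enum andbT. Qed.

Definition dec_y j : nat -> R :=
  if j is j'.+1 then fun l => \sum_(i < r) a i * Y i j' l else b.

Definition dec_F j : {fset nat} :=
  if j is j'.+1 then \bigcup_(i <- active) FF i j' else F0.

Lemma mem_dec_F j l : (l \in dec_F j.+1) = [exists i : 'I_r, (a i != 0) && (l \in FF i j)].
Proof.
apply/bigfcupP/existsP => [[i /andP [ni _] lF]|[i /andP [ai lF]]].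
  by exists i; rewrite -mem_active ni.
by exists i; rewrite ?mem_active ?ai.
Qed.

Lemma aY_supp_disj j l (i i' : 'I_r) : (j <= k)%N ->
  a i * Y i j l != 0 -> a i' * Y i' j l != 0 -> i = i'.
Proof.
rewrite !mulf_eq0 !negb_or => le_jk /andP [_ Yi] /andP [_ Yi'].
exact: z_supp_disj (Y_supp_z le_jk Yi) (Y_supp_z le_jk Yi').
Qed.

Lemma dec_y_neq0 j l :
  (j <= k)%N -> (dec_y j.+1 l != 0) = [exists i : 'I_r, (a i != 0) && (Y i j l != 0)].
Proof.
move=> le_jk; rewrite sum_disjoint_supp_neq0 => [|i i' _ _]; last exact: aY_supp_disj.
by apply: eq_existsb => i; rewrite mulf_eq0 negb_or.
Qed.

Lemma dec_supp j : (j <= k.+1)%N -> supp_is (dec_y j) (dec_F j).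
Proof.
case: j => // j le_jk l; rewrite mem_dec_F dec_y_neq0 //.
by apply: eq_existsb => i; rewrite (decomp_supp (Y_decomp i) le_jk).
Qed.

Lemma dec_disj i j :
  (i <= k.+1)%N -> (j <= k.+1)%N -> i != j -> dec_F i `&` dec_F j = fset0.
Proof.
wlog lt_ij : i j / (i < j)%N.
  move=> gen le_i le_j; rewrite neq_ltn => /orP [lt|lt].
    by apply: gen; rewrite ?ltn_eqF.
  by rewrite fsetIC; apply: gen; rewrite ?ltn_eqF.
case: j lt_ij => // j lt_ij _ le_jk _; apply/fsetP => l.
rewrite in_fsetI in_fset0 mem_dec_F; apply/negbTE/andP => -[+ /existsP [u /andP [_ lu]]].
have zu := mem_FF_z le_jk lu.
case: i lt_ij => [_|i lt_ij].
  rewrite /= mem_F0 => /existsP [v /andP [/eqP mv _]].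
  by have := z_supp_off_nodes v zu; rewrite mv eqxx.
rewrite mem_dec_F => /existsP [v /andP [_ lv]].
rewrite ltnS in lt_ij; have le_ik := ltnW (leq_trans lt_ij le_jk).
have ev := z_supp_disj zu (mem_FF_z le_ik lv); subst v.
have /fsetP/(_ l) := decomp_disj (Y_decomp u) le_jk le_ik (negbT (gtn_eqF lt_ij)).
by rewrite in_fsetI lu lv in_fset0.
Qed.

Lemma dec_sum l : b l + \sum_(i < r) a i * z i l = \sum_(j < k.+2) dec_y j l.
Proof.
rewrite big_ord_recl; congr (_ + _).
under [RHS]eq_bigr do rewrite lift0.
under [LHS]eq_bigr => i _ do rewrite (decomp_sum (Y_decomp i)) mulr_sumr.
exact: exchange_big.
Qed.

Lemma dec_norm j :
  (j <= k)%N -> \sum_(l <- dec_F j.+1) `|dec_y j.+1 l| = (theta (p (n + j.+1)%N))^-1.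
Proof.
move=> le_jk; have norm_y l : `|dec_y j.+1 l| = \sum_(i < r) `|a i| * `|Y i j l|.
  rewrite norm_sum_disjoint_supp => [|i i' _ _]; last exact: aY_supp_disj.
  by under eq_bigr do rewrite normrM.
under eq_bigr do rewrite norm_y.
rewrite exchange_big /= -[RHS]mul1r -sum_norm_a mulr_suml.
apply: eq_bigr => i _; rewrite -mulr_sumr.
case: (eqVneq (a i) 0) => [-> | ai]; first by rewrite normr0 !mul0r.
congr (_ * _); have dec := Y_decomp i.
rewrite (l1_supp_incl (decomp_supp dec le_jk)) ?(decomp_norm dec) ?addSnnS //.
by apply/fsubsetP => l lF; rewrite mem_dec_F; apply/existsP; exists i; rewrite ai.
Qed.

Lemma pairwise_active j :
  (j <= k)%N -> pairwise (fun i i' => allrel ltn (FF i j) (FF i' j)) active.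
Proof.
move=> le_jk; apply: pairwise_filter.
have : pairwise (fun i i' : 'I_r => (i < i')%N) (enum 'I_r).
  rewrite -(pairwise_map val ltn) val_enum_ord -sorted_pairwise ?iota_ltn_sorted //.
  exact: ltn_trans.
apply: sub_pairwise => i i' lt_ii'; apply/allrelP => u v uF vF.
exact: z_supp_lt lt_ii' (mem_FF_z le_jk uF) (mem_FF_z le_jk vF).
Qed.

Lemma schreier_moved_nodes (mu : 'I_r -> nat) :
  (forall i : 'I_r, a i != 0 -> z i (mu i) != 0) ->
  schreier (OSucc (eta n)) [fset mu i | i in active].
Proof.
(* h sends each node m i to mu i; its values off the nodes are irrelevant. *)
move=> z_mu; pose h l := if [pick i : 'I_r | m i == l] is Some i then mu i else l.
have h_m (i : 'I_r) : h (m i) = mu i.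
  by rewrite /h; case: pickP => [i' /eqP /node_inj -> // | /(_ i)]; rewrite eqxx.
have -> : [fset mu i | i in active] = h @` F0.
  apply/fsetP => t; apply/imfsetP/imfsetP => -[x].
    rewrite /= mem_active => ax ->; exists (m x); last by rewrite h_m.
    by rewrite mem_F0; apply/existsP; exists x; rewrite eqxx ax.
  rewrite /= mem_F0 => /existsP [i /andP [/eqP <- ai]] ->.
  by exists i; rewrite ?h_m ?mem_active.
apply: (@spreading_schreier _ F0 h b_schreier) => [l | l l']; rewrite ?mem_F0.
  move=> /existsP [i /andP [/eqP <- ai]]; rewrite h_m.
  exact/ltnW/(z_between (ltn_ord i) (z_mu i ai)).1.
move=> /existsP [i /andP [/eqP <- ai]] /existsP [i' /andP [/eqP <- ai']] lt_m.
rewrite !h_m; apply: z_supp_lt (z_mu i ai) (z_mu i' ai').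
by rewrite ltnNge; apply: contraL lt_m => le_i'i; rewrite -leqNgt node_le // le_i'i ltn_ord.
Qed.

Lemma dec_schreier j : (j <= k)%N ->
  iter_comp [seq schreier (OSucc (eta (n + i)%N)) | i <- iota 0 j.+2] (dec_F j.+1).
Proof.
move=> le_jk.
have [mu min_mu] : exists mu : 'I_r -> nat, forall i, is_min (mu i) (FF i j).
  by apply: (fin_all_exists (P := fun i t => is_min t (FF i j))) => i; apply: exists_min_FF.
have -> : [seq schreier (OSucc (eta (n + i)%N)) | i <- iota 0 j.+2] =
    schreier (OSucc (eta n)) :: [seq schreier (OSucc (eta (n.+1 + i)%N)) | i <- iota 0 j.+1].
  have -> : iota 0 j.+2 = 0 :: map (addn 1) (iota 0 j.+1) by rewrite -iotaDl.
  rewrite map_cons -map_comp addn0; congr (_ :: _).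
  by apply: eq_map => i /=; rewrite addnA addn1.
apply: compose_iter_comp; apply: (compose_bigfcup (mu := mu)).
- by move=> i _; split; [apply: min_mu | apply: (decomp_schreier (Y_decomp i))].
- exact: pairwise_active.
- by apply: schreier_moved_nodes => i _; apply: mem_FF_z le_jk (min_mu i).1.
Qed.

Lemma decomposition_step :
  is_decomposition theta p eta M k.+1 n
    (fun l => b l + \sum_(i < r) a i * z i l) dec_y dec_F.
Proof.
split=> [j|i j|l|[|j] le_jk|[|j] le_jk|[|j] le_jk].
- exact: dec_supp.
- exact: dec_disj.
- exact: dec_sum.
- by rewrite addn0.
- exact: dec_norm.
- by rewrite /= addn0.
- exact: dec_schreier.
- by rewrite addn0.
- move=> l; rewrite mem_dec_F => /existsP [i /andP [_ lF]].
  by rewrite -addSnnS; apply: (decomp_M (Y_decomp i) le_jk).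
Qed.

End DecompositionStep.

Lemma Zset_decomposition (R : realType) (theta : nat -> R) (p : nat -> nat)
    (eta : nat -> cord) (M : nat -> pred nat) (c : nat -> R) k :
  forall n x, (forall j, 0 < theta (p (n + j)%N)) -> Zset theta p eta M c k n x ->
  exists y Fs, is_decomposition theta p eta M k n x y Fs.
Proof.
elim: k => [|k IHk] n x theta_gt0 /=.
  case=> F [suppF [normF [schF [MF _]]]]; exists (fun=> x), (fun=> F).
  split=> [j _ //|[|i] [|j] //|l|[|j] // _|[|j] // _|[|j] // _].
  - by rewrite big_ord1.
  - by rewrite addn0.
  - by rewrite /= addn0.
  - by rewrite addn0.
case=> r [a [m [z [Zz [m_incr [z_between [[F0 [b_supp [b_norm [b_sch [b_M _]]]]] ->]]]]]]].
have theta_gt0_succ j : 0 < theta (p (n.+1 + j)%N) by rewrite addSnnS.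
have /fin_all_exists [YF YF_dec] : forall i : 'I_r, exists YF,
    is_decomposition theta p eta M k n.+1 (z i) YF.1 YF.2.
  by move=> i; have [y [Fs dec]] := IHk n.+1 (z i) theta_gt0_succ (Zz i (ltn_ord i)); exists (y, Fs).
by eexists; eexists; apply: decomposition_step YF_dec.
Qed.

Theorem proposition9 (R : realType) (theta : nat -> R) (eps : R)
    (p q : nat -> nat) (eta : nat -> cord) (M : nat -> pred nat) (c : nat -> R) :
  (forall n, (0 < n)%N -> 0 < theta n < 1) ->
  (forall n, (0 < n)%N -> theta n.+1 <= theta n) ->
  (forall e : R, 0 < e -> exists N, forall n, (N <= n)%N -> theta n < e) ->
  0 < eps < 1 ->
  (0 < p 1)%N ->
  (forall n, (0 < n)%N -> (p n < q n)%N /\ (q n < p n.+1)%N) ->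
  (forall n, (0 < n)%N -> theta (p n) <= eps ^+ 2 / 4%:R ^+ n) ->
  (forall n, (0 < n)%N -> theta (q n) <= eps * theta (p n) / 4%:R ^+ n) ->
  (forall n N, exists m, (N <= m)%N /\ M n m) ->
  (forall n l, M n.+1 l -> M n l) ->
  (forall n, (0 < n)%N -> 0 < c n <= (4%:R ^+ n)^-1) ->
  forall (n k : nat) (x : nat -> R), (0 < n)%N ->
  Zset theta p eta M c k n x ->
  exists (y : nat -> nat -> R) (Fs : nat -> {fset nat}),
    (forall j, (j <= k)%N -> supp_is (y j) (Fs j)) /\
    (forall i j, (i <= k)%N -> (j <= k)%N -> i != j -> Fs i `&` Fs j = fset0) /\
    (forall l, x l = \sum_(j < k.+1) y j l) /\
    (forall j, (j <= k)%N -> \sum_(l <- Fs j) `|y j l| = (theta (p (n + j)))^-1) /\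
    (forall j, (j <= k)%N ->
       iter_comp [seq schreier (OSucc (eta (n + i))) | i <- iota 0 j.+1] (Fs j) /\
       (forall l, l \in Fs j -> M (n + j) l)).
Proof.
move=> theta_bds _ _ _ p1_gt0 pq_incr _ _ _ _ _ n k x n_gt0 Zx.
have p_gt0 i : (0 < i)%N -> (0 < p i)%N.
  case: i => [//|[_|i _]]; first exact: p1_gt0.
  exact: leq_ltn_trans (leq0n _) (pq_incr i.+1 isT).2.
have theta_gt0 j : 0 < theta (p (n + j)%N).
  by have /andP [] := theta_bds _ (p_gt0 _ (ltn_addr j n_gt0)).
have [y [Fs [supp disj sum norm sch inM]]] := Zset_decomposition theta_gt0 Zx.
(* The statement adds indices with the ring addition of nat, convertible to addn. *)
exists y, Fs; do 4!split => //.
by move=> j le_jk; split; [apply: sch | apply: inM].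
Qed.
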